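(* Assume $\overline u>0$ and that $\Theta$ contains at least two points. For $x,y\in\mathbb{Z}^d$ define $\alpha^{x,y}(k)=\frac12\bigl(e^{-c|k-x|_1}+e^{-c|k-y|_1}\bigr)$ with $c=\frac1n\ln\bigl(1+\frac{\overline u}{2\|u\|_{\ell^1}}\bigr)$, $n=\max_{i,j\in\Theta}|i-j|_1$, and $W^{x,y}(k)=\sum_{j\in\mathbb{Z}^d}\alpha^{x,y}(j)u(k-j)$. Then for all $x,y,k\in\mathbb{Z}^d$, \[ W^{x,y}(k)\ge\alpha^{x,y}(k)\frac{\overline u}{2}>0, \] and in particular $W^{x,y}(k)\ge\overline u/4$ for $k\in\{x,y\}$.
   Context: $d\ge1$; $|x|_1=\sum_i|x_i|$. $u:\mathbb{Z}^d\to\mathbb{R}$ has finite nonempty support $\Theta$ with $0\in\Theta$; $\overline u=\sum_ku(k)$, $\|u\|_{\ell^1}=\sum_k|u(k)|$. *)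

From HB Require Import structures.
From mathcomp Require Import all_boot all_order all_algebra.
From mathcomp Require Import finmap.
From mathcomp Require Import all_classical all_reals all_analysis.
Set Implicit Arguments. Unset Strict Implicit. Unset Printing Implicit Defensive.
Import Order.TTheory GRing.Theory Num.Theory.
Local Open Scope ring_scope.
Local Open Scope fset_scope.

Definition l1 (d : nat) (x : 'rV[int]_d) : int := \sum_(i < d) `|x ord0 i|.

Definition ubar (R : realType) (d : nat) (Theta : {fset 'rV[int]_d})
  (u : 'rV[int]_d -> R) : R := \sum_(k <- Theta) u k.
Definition unorm (R : realType) (d : nat) (Theta : {fset 'rV[int]_d})
  (u : 'rV[int]_d -> R) : R := \sum_(k <- Theta) `|u k|.

Definition diamTheta (d : nat) (Theta : {fset 'rV[int]_d}) : nat :=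
  \max_(i <- Theta) \max_(j <- Theta) `|l1 (i - j)|%N.

Definition cconst (R : realType) (d : nat) (Theta : {fset 'rV[int]_d})
  (u : 'rV[int]_d -> R) : R :=
  (diamTheta Theta)%:R^-1 * ln (1 + ubar Theta u / (2 * unorm Theta u)).

Definition alpha (R : realType) (d : nat) (c : R) (x y k : 'rV[int]_d) : R :=
  2^-1 * (expR (- c * (l1 (k - x))%:~R) + expR (- c * (l1 (k - y))%:~R)).

(* W(k) = sum_{j in Z^d} alpha(j) u(k - j).  Since u vanishes outside Theta,
   the summand vanishes unless j = k - t with t in Theta; the series is thus
   the finite sum over the (finite) set {k - t | t in Theta} of indices j. *)
Definition W (R : realType) (d : nat) (Theta : {fset 'rV[int]_d})
  (u : 'rV[int]_d -> R) (x y k : 'rV[int]_d) : R :=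
  \sum_(j <- [fset (k - t) | t in Theta])
     alpha (cconst Theta u) x y j * u (k - j).

From HB Require Import structures.
From mathcomp Require Import all_boot all_order all_algebra.
From mathcomp Require Import finmap.
From mathcomp Require Import all_classical all_reals all_analysis.
From mathcomp Require Import ring lra zify.
Set Implicit Arguments. Unset Strict Implicit. Unset Printing Implicit Defensive.
Import Order.TTheory GRing.Theory Num.Theory.
Local Open Scope ring_scope.

(* Shifting the argument of [k |-> exp(-c |k - z|_1)] by some t in Theta moves
   the exponent by at most c |t|_1 <= c n, so the shifted weight is the
   unshifted one times a factor within e^(c n) - 1 = ubar / (2 ||u||) of 1.
   Convolving with u therefore loses at most (ubar / (2 ||u||)) ||u|| = ubar / 2
   of the main term ubar exp(-c |k - z|_1); summing over z in {x, y} gives the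
   bound, and at k = x or k = y one of the two exponentials equals 1. *)

Section L1Norm.
Variable d : nat.
Implicit Types a b : 'rV[int]_d.

Lemma l1_ge0 a : 0 <= l1 a.
Proof. by apply: sumr_ge0 => i _. Qed.

Lemma l1D a b : l1 (a + b) <= l1 a + l1 b.
Proof. by rewrite /l1 -big_split; apply: ler_sum => i _; rewrite mxE ler_normD. Qed.

Lemma l1N a : l1 (- a) = l1 a.
Proof. by apply: eq_bigr => i _; rewrite mxE normrN. Qed.

Lemma l10 : l1 (0 : 'rV[int]_d) = 0.
Proof. by rewrite /l1 big1 // => i _; rewrite mxE. Qed.

Lemma l1_subr_dist a b : `|l1 (a - b) - l1 a| <= l1 b.
Proof.
have le_ab : l1 (a - b) <= l1 a + l1 b by rewrite -(l1N b) l1D.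
have le_a : l1 a <= l1 (a - b) + l1 b by rewrite -{1}(subrK b a) l1D.
by rewrite ler_norml; apply/andP; split; lia.
Qed.

End L1Norm.

Lemma norm_expR_sub1_le (R : realType) (z m : R) :
  `|z| <= m -> `|expR z - 1| <= expR m - 1.
Proof.
move=> zm; have := expR_ge1Dx z; have := expR_ge1Dx m.
have [z0|z0] := leP 0 z.
- have ez1 : 1 <= expR z by rewrite -expR0 ler_expR.
  rewrite ger0_norm ?subr_ge0 // lerD2r ler_expR.
  by rewrite ger0_norm in zm.
- have ez1 : expR z <= 1 by rewrite -expR0 ler_expR ltW.
  by rewrite ler0_norm ?subr_le0 //; rewrite ltr0_norm // in zm; lra.
Qed.

Section ExpConvolution.
Context {R : realType} {d : nat} {Theta : {fset 'rV[int]_d}} {u : 'rV[int]_d -> R}.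

Lemma ubar_le_unorm : ubar Theta u <= unorm Theta u.
Proof. exact: le_trans (ler_norm _) (ler_norm_sum _ _ _). Qed.

Lemma l1_le_diamTheta t : 0 \in Theta -> t \in Theta ->
  (l1 t)%:~R <= (diamTheta Theta)%:R :> R.
Proof.
move=> Theta0 Thetat.
have : (`|l1 (t - 0)|%N <= diamTheta Theta)%N.
  by apply: (bigmaxn_sup_seq t) => //; apply: (bigmaxn_sup_seq 0).
by rewrite subr0 -(ler_nat R) natr_absz ger0_norm ?l1_ge0.
Qed.

Lemma expR_cconst_diam : 0 < ubar Theta u ->
  expR (cconst Theta u * (diamTheta Theta)%:R)
    <= 1 + ubar Theta u / (2 * unorm Theta u).
Proof.
move=> ubar_gt0; have unorm_gt0 := lt_le_trans ubar_gt0 ubar_le_unorm.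
have q_gt0 : 0 < ubar Theta u / (2 * unorm Theta u) by rewrite divr_gt0 ?mulr_gt0.
have [->|n_neq0] := eqVneq (diamTheta Theta) 0%N; first by rewrite mulr0 expR0 lerDl ltW.
by rewrite /cconst mulrAC mulVf ?pnatr_eq0 // mul1r lnK // posrE addr_gt0.
Qed.

Lemma shifted_expR_sum_ge (c M : R) (N : nat) (z k : 'rV[int]_d) :
  0 <= c -> expR (c * N%:R) <= 1 + M ->
  (forall t, t \in Theta -> (l1 t)%:~R <= N%:R :> R) ->
  expR (- c * (l1 (k - z))%:~R) * (ubar Theta u - M * unorm Theta u)
    <= \sum_(t <- Theta) expR (- c * (l1 (k - t - z))%:~R) * u t.
Proof.
move=> c_ge0 cN_le tN.
set F := expR (- c * (l1 (k - z))%:~R).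
rewrite /ubar /unorm mulr_sumr -sumrB mulr_sumr big_seq [leRHS]big_seq.
apply: ler_sum => t Thetat.
set E := expR (- c * (l1 (k - z - t) - l1 (k - z))%:~R).
have shiftE : expR (- c * (l1 (k - t - z))%:~R) = F * E.
  by rewrite /F /E -expRD addrAC intrB; congr expR; ring.
have E_near1 : `|E - 1| <= M.
  apply: le_trans (_ : expR (c * N%:R) - 1 <= M); last by lra.
  apply: norm_expR_sub1_le; rewrite normrM normrN (ger0_norm c_ge0).
  apply: ler_wpM2l => //; apply: le_trans (tN t Thetat).
  by rewrite -intr_norm ler_int l1_subr_dist.
have err_le : - (M * `|u t|) <= (E - 1) * u t.
  rewrite lerNl; apply: le_trans (ler_norm _) _.
  by rewrite normrN normrM ler_wpM2r.
rewrite shiftE -mulrA; apply: ler_wpM2l; first exact: expR_ge0.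
by rewrite mulrBl mul1r in err_le; lra.
Qed.

Lemma W_split (x y k : 'rV[int]_d) : W Theta u x y k = 2^-1 *
  (\sum_(t <- Theta) expR (- cconst Theta u * (l1 (k - t - x))%:~R) * u t +
   \sum_(t <- Theta) expR (- cconst Theta u * (l1 (k - t - y))%:~R) * u t).
Proof.
rewrite /W big_imfset /=; last by move=> ? ? _ _ /addrI /oppr_inj.
rewrite -big_split mulr_sumr; apply: eq_bigr => t _.
by rewrite opprB addrCA subrr addr0 /alpha -mulrA mulrDl.
Qed.

End ExpConvolution.

Lemma alpha_gt0 (R : realType) d (c : R) (x y k : 'rV[int]_d) : 0 < alpha c x y k.
Proof. by rewrite mulr_gt0 ?invr_gt0 ?ltr0n // addr_gt0 ?expR_gt0. Qed.

Lemma half_le_alpha_at_x (R : realType) d (c : R) (x y : 'rV[int]_d) : 2^-1 <= alpha c x y x.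
Proof.
rewrite /alpha subrr l10 mulr0 expR0 ler_pMr ?invr_gt0 ?ltr0n //.
by rewrite lerDl expR_ge0.
Qed.

Lemma alpha_sym (R : realType) d (c : R) (x y k : 'rV[int]_d) :
  alpha c x y k = alpha c y x k.
Proof. by rewrite /alpha addrC. Qed.

Local Open Scope fset_scope.

Theorem lemmaA4 (R : realType) (d : nat) (Theta : {fset 'rV[int]_d})
  (u : 'rV[int]_d -> R)
  (hd : (1 <= d)%N)
  (hsupp : forall k, u k != 0 <-> k \in Theta)
  (h0 : 0 \in Theta)
  (htwo : (2 <= #|` Theta|)%N)
  (hpos : 0 < ubar Theta u) :
  forall x y : 'rV[int]_d,
    (forall k, alpha (cconst Theta u) x y k * (ubar Theta u / 2) <= W Theta u x y k
               /\ 0 < alpha (cconst Theta u) x y k * (ubar Theta u / 2))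
    /\ ubar Theta u / 4 <= W Theta u x y x
    /\ ubar Theta u / 4 <= W Theta u x y y.
Proof.
move=> x y; set U := ubar Theta u; set V := unorm Theta u; set c := cconst Theta u.
have V_gt0 : 0 < V := lt_le_trans hpos ubar_le_unorm.
have c_ge0 : 0 <= c.
  by rewrite mulr_ge0 ?invr_ge0 // ln_ge0 // lerDl ltW // divr_gt0 ?mulr_gt0.
have half_U : U / 2 = U - U / (2 * V) * V by field; rewrite gt_eqF.
have main k : alpha c x y k * (U / 2) <= W Theta u x y k.
  rewrite W_split /alpha -mulrA ler_wpM2l ?invr_ge0 ?ler0n // mulrDl half_U.
  have cn_le := expR_cconst_diam hpos.
  have t_le t : t \in Theta -> (l1 t)%:~R <= (diamTheta Theta)%:R :> R.
    exact: l1_le_diamTheta.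
  by apply: lerD; apply: shifted_expR_sum_ge c_ge0 cn_le t_le.
have quarter_le z : 2^-1 <= alpha c x y z -> U / 4 <= W Theta u x y z.
  move=> az; apply: le_trans (main z).
  rewrite (_ : U / 4 = 2^-1 * (U / 2)); last by field.
  by rewrite ler_wpM2r // divr_ge0 // ltW.
split; first by move=> k; split; [exact: main | by rewrite mulr_gt0 ?alpha_gt0 // divr_gt0].
split; apply: quarter_le; first exact: half_le_alpha_at_x.
by rewrite alpha_sym; exact: half_le_alpha_at_x.
Qed.
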